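(* Let $m,n,p,q\in\mathbb{R}$ with $m<0$, and let $P(t)=t^5+mt^3+nt^2+pt+q$. Set $u=\frac{2\sqrt{-m}}{\sqrt5}$, $\alpha=\frac{16n}{u^3}$, $\beta=\frac{16p}{u^4}-5$, $\gamma=\frac{16q}{u^5}$, and $f(\theta)=\alpha\cos^2\theta+\beta\cos\theta+\cos 5\theta+\gamma$. Then the map $\theta\mapsto u\cos\theta$ restricts to a bijection from the set of zeros of $f$ in $[0,\pi]$ onto the set of roots of $P$ in $[-u,u]$. Explicitly, $\theta_0\in[0,\pi]$ satisfies $f(\theta_0)=0$ if and only if $t_0=u\cos\theta_0$ is a root of $P$. *)

From Stdlib Require Import Reals.
Open Scope R_scope.

Definition quinticP (m n p q t : R) : R :=
  t ^ 5 + m * t ^ 3 + n * t ^ 2 + p * t + q.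

Definition u_of (m : R) : R := 2 * sqrt (- m) / sqrt 5.

Definition f_theta (m n p q theta : R) : R :=
  let u := u_of m in
  let alpha := 16 * n / u ^ 3 in
  let beta := 16 * p / u ^ 4 - 5 in
  let gamma := 16 * q / u ^ 5 in
  alpha * (cos theta) ^ 2 + beta * cos theta + cos (5 * theta) + gamma.

(* Quintuple-angle substitution: cos 5θ = 16 c^5 - 20 c^3 + 5 c with c = cos θ.  Putting
   t = u c, one gets u^5 f(θ) = 16 t^5 - 20 u^2 t^3 + 16 n t^2 + 16 p t + 16 q (the 5 c of
   cos 5θ cancels the -5 in β), and u^2 = -4m/5 makes this 16 P(t).  So f(θ) = 0 iff
   P(u cos θ) = 0, and θ ↦ u cos θ is a bijection [0, π] → [-u, u] because u > 0. *)
From Stdlib Require Import Reals Lra.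
Open Scope R_scope.

Lemma cos_5x (x : R) : cos (5 * x) = 16 * cos x ^ 5 - 20 * cos x ^ 3 + 5 * cos x.
Proof.
  replace (5 * x) with (x + x + x + x + x) by ring.
  repeat rewrite ?cos_plus, ?sin_plus.
  assert (sin_sqr : sin x * sin x = 1 - cos x * cos x).
  { pose proof (sin2_cos2 x) as h; unfold Rsqr in h; lra. }
  set (s := sin x) in *; set (c := cos x) in *.
  transitivity (c ^ 5 - 10 * c ^ 3 * (s * s) + 5 * c * ((s * s) * (s * s))); [ring|].
  rewrite sin_sqr; ring.
Qed.

Section ScaledCosine.

Variable u : R.
Hypothesis u_gt0 : 0 < u.

Lemma scaled_cos_bound (theta : R) : - u <= u * cos theta <= u.
Proof. pose proof (COS_bound theta); nra. Qed.

Lemma scaled_cos_inj (theta1 theta2 : R) :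
  0 <= theta1 <= PI -> 0 <= theta2 <= PI ->
  u * cos theta1 = u * cos theta2 -> theta1 = theta2.
Proof.
  intros h1 h2 e; apply cos_inj; [exact h1 | exact h2 |].
  apply (Rmult_eq_reg_l u); lra.
Qed.

Lemma scaled_cos_surj (t : R) : - u <= t <= u ->
  exists theta, 0 <= theta <= PI /\ u * cos theta = t.
Proof.
  intros ht; exists (acos (t / u)); split; [apply acos_bound |].
  assert (ht' : -1 <= t / u <= 1).
  { assert (t = u * (t / u)) by (field; lra); split; nra. }
  rewrite cos_acos by exact ht'; field; lra.
Qed.

End ScaledCosine.

Lemma u_of_gt0 (m : R) : m < 0 -> 0 < u_of m.
Proof.
  intros hm; unfold u_of; apply Rdiv_lt_0_compat.
  - apply Rmult_lt_0_compat; [lra | apply sqrt_lt_R0; lra].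
  - apply sqrt_lt_R0; lra.
Qed.

Lemma u_of_sqr (m : R) : m < 0 -> u_of m ^ 2 = - 4 / 5 * m.
Proof.
  intros hm; unfold u_of.
  assert (sqrt5_gt0 : 0 < sqrt 5) by (apply sqrt_lt_R0; lra).
  replace ((2 * sqrt (- m) / sqrt 5) ^ 2)
    with (4 * (sqrt (- m) * sqrt (- m)) / (sqrt 5 * sqrt 5)) by (field; lra).
  rewrite !sqrt_sqrt by lra; field.
Qed.

Lemma f_theta_quinticP (m n p q theta : R) : m < 0 ->
  f_theta m n p q theta = 16 * quinticP m n p q (u_of m * cos theta) / u_of m ^ 5.
Proof.
  intros hm.
  assert (hu := u_of_gt0 m hm).
  assert (hm_u : m = - 5 / 4 * u_of m ^ 2) by (rewrite (u_of_sqr m hm); field).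
  unfold f_theta, quinticP; rewrite cos_5x.
  set (u := u_of m) in *; rewrite hm_u; field; lra.
Qed.

Lemma f_theta_eq0 (m n p q theta : R) : m < 0 ->
  f_theta m n p q theta = 0 <-> quinticP m n p q (u_of m * cos theta) = 0.
Proof.
  intros hm; rewrite (f_theta_quinticP _ _ _ _ _ hm).
  assert (hu := u_of_gt0 m hm).
  set (P := quinticP _ _ _ _ _).
  split; intros h.
  - replace P with (16 * P / u_of m ^ 5 * (u_of m ^ 5 / 16)) by (field; lra).
    rewrite h; ring.
  - rewrite h; field; lra.
Qed.

Theorem corollary1 (m n p q : R) (hm : m < 0) :
  (* explicit form: theta0 in [0,pi] is a zero of f iff u cos theta0 is a root of P *)
  (forall theta0 : R, 0 <= theta0 <= PI ->
     (f_theta m n p q theta0 = 0 <-> quinticP m n p q (u_of m * cos theta0) = 0)) /\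
  (* the map theta |-> u cos theta sends zeros of f in [0,pi] into roots of P in [-u,u] *)
  (forall theta : R, 0 <= theta <= PI -> f_theta m n p q theta = 0 ->
     - u_of m <= u_of m * cos theta <= u_of m /\
     quinticP m n p q (u_of m * cos theta) = 0) /\
  (* injective on the zeros of f in [0,pi] *)
  (forall theta1 theta2 : R, 0 <= theta1 <= PI -> 0 <= theta2 <= PI ->
     f_theta m n p q theta1 = 0 -> f_theta m n p q theta2 = 0 ->
     u_of m * cos theta1 = u_of m * cos theta2 -> theta1 = theta2) /\
  (* surjective onto the roots of P in [-u,u] *)
  (forall t : R, - u_of m <= t <= u_of m -> quinticP m n p q t = 0 ->
     exists theta : R, 0 <= theta <= PI /\ f_theta m n p q theta = 0 /\
       u_of m * cos theta = t).
Proof.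
  assert (hu := u_of_gt0 m hm).
  split; [intros theta _; exact (f_theta_eq0 m n p q theta hm) |].
  split.
  { intros theta _ hf; split; [exact (scaled_cos_bound _ hu theta) |].
    exact (proj1 (f_theta_eq0 m n p q theta hm) hf). }
  split; [intros theta1 theta2 h1 h2 _ _; exact (scaled_cos_inj _ hu _ _ h1 h2) |].
  intros t ht hP.
  destruct (scaled_cos_surj _ hu t ht) as [theta [htheta <-]].
  exists theta; repeat split; try apply htheta.
  exact (proj2 (f_theta_eq0 m n p q theta hm) hP).
Qed.
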